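(* Let $\lambda\in\mathbf{k}$, let $V$ be a $\mathbf{k}$-module and $d_0:V\to V$ a linear map. Then $(T^+(V),\prec_V,\succ_V,d_V)$, together with the natural embedding $j_V:V=V^{\otimes1}\hookrightarrow T^+(V)$, is the free commutative differential dendriform algebra of weight $\lambda$ on $(V,d_0)$: it is a commutative differential dendriform algebra of weight $\lambda$, and for every commutative differential dendriform algebra $(D,\prec_D,\succ_D,d_D)$ of weight $\lambda$ and every linear map $\psi:V\to D$ with $d_D\psi=\psi d_0$, there is a unique linear map $\bar\psi:T^+(V)\to D$ preserving $\prec$ and $\succ$, satisfying $d_D\bar\psi=\bar\psi d_V$ and $\bar\psi j_V=\psi$.
   Context: $\mathbf{k}$ is a commutative unital ring. $T(V)=\bigoplus_{k\ge0}V^{\otimes k}$ (with $V^{\otimes0}=\mathbf{k}$, unit $\mathbf 1$ the empty tensor), $T^+(V)=\bigoplus_{k\ge1}V^{\otimes k}$. The shuffle product $\ast_0$ on $T(V)$ is defined recursively by $\mathbf 1\ast_0\mathfrak a=\mathfrak a\ast_0\mathbf 1=\mathfrak a$ and, for pure tensors $\mathfrak a=a_1\otimes\mathfrak a'$, $\mathfrak b=b_1\otimes\mathfrak b'$ ($a_1,b_1\in V$), $\mathfrak a\ast_0\mathfrak b=a_1\otimes(\mathfrak a'\ast_0\mathfrak b)+b_1\otimes(\mathfrak a\ast_0\mathfrak b')$. On $T^+(V)$: $\mathfrak a\prec_V\mathfrak b:=a_1\otimes(\mathfrak a'\ast_0\mathfrak b)$, $\mathfrak a\succ_V\mathfrak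 b:=b_1\otimes(\mathfrak a\ast_0\mathfrak b')$. The linear map $d_V:T^+(V)\to T^+(V)$ is $d_V(a_1\otimes\cdots\otimes a_m)=\sum_{\emptyset\ne S\subseteq\{1,\dots,m\}}\lambda^{|S|-1}c^S_1\otimes\cdots\otimes c^S_m$ with $c^S_i=d_0(a_i)$ for $i\in S$ and $c^S_i=a_i$ otherwise. A dendriform algebra is a $\mathbf{k}$-module $D$ with bilinear operations $\prec,\succ$ such that for all $a,b,c\in D$: $(a\prec b)\prec c=a\prec(b\prec c+b\succ c)$, $(a\succ b)\prec c=a\succ(b\prec c)$, $(a\prec b+a\succ b)\succ c=a\succ(b\succ c)$. It is commutative if $a\succ b=b\prec a$ for all $a,b$. A derivation of weight $\lambda$ on it is a linear map $d$ with $d(a\prec b)=d(a)\prec b+a\prec d(b)+\lambda d(a)\prec d(b)$ and $d(a\succ b)=d(a)\succ b+a\succ d(b)+\lambda d(a)\succ d(b)$ for all $a,b$; then $(D,\prec,\succ,d)$ is a differential dendriform algebra of weight $\lambda$, called commutative if $(D,\prec,\succ)$ is commutative. *)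

From HB Require Import structures.
From mathcomp Require Import all_boot all_algebra.
From Stdlib Require Import ClassicalEpsilon.

Set Implicit Arguments.
Unset Strict Implicit.
Unset Printing Implicit Defensive.

Import GRing.Theory.
Local Open Scope ring_scope.
Local Open Scope quotient_scope.

Section Dendriform.
Variable (k : comPzRingType) (D : lmodType k).

Definition klinear (W1 W2 : lmodType k) (f : W1 -> W2) : Prop := linear f.

Definition kbilinear (op : D -> D -> D) : Prop :=
  (forall a, klinear (op a)) /\ (forall b, klinear (fun a => op a b)).

Definition dendriform (prec succ : D -> D -> D) : Prop :=
  [/\ kbilinear prec, kbilinear succ,
      (forall a b c, prec (prec a b) c = prec a (prec b c + succ b c)),
      (forall a b c, prec (succ a b) c = succ a (prec b c)) &
      (forall a b c, succ (prec a b + succ a b) c = succ a (succ b c))].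

Definition comm_dendriform (prec succ : D -> D -> D) : Prop :=
  dendriform prec succ /\ forall a b, succ a b = prec b a.

Definition dend_derivation (lambda : k) (prec succ : D -> D -> D) (d : D -> D) :=
  [/\ klinear d,
      (forall a b, d (prec a b) = prec (d a) b + prec a (d b) + lambda *: prec (d a) (d b)) &
      (forall a b, d (succ a b) = succ (d a) b + succ a (d b) + lambda *: succ (d a) (d b))].

Definition comm_diff_dendriform (lambda : k) (prec succ : D -> D -> D) (d : D -> D) :=
  comm_dendriform prec succ /\ dend_derivation lambda prec succ d.

End Dendriform.

(* The k-module T^+(V) = (+)_{m >= 1} V^{(x) m}.                              *)
(* Representatives: finite formal k-linear combinations of words             *)
(*   e = [:: (c_1, w_1); ...; (c_n, w_n)]  standing for  sum_i c_i w_i,       *)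
(* where a word w = [:: a_1; ...; a_m] stands for a_1 (x) ... (x) a_m.        *)
(* Two representatives are identified iff they have the same image under     *)
(* every map on words that is k-multilinear in each letter and kills the     *)
(* empty word (universal property of the tensor powers; the empty word is    *)
(* killed since we are in T^+(V), not T(V)).                                 *)
Section TensorPlus.
Variables (k : comPzRingType) (V : lmodType k).

Definition fsum := seq (k * seq V).

Definition multilin (W : lmodType k) (f : seq V -> W) : Prop :=
  f [::] = 0 /\
  forall (u w : seq V) (r : k) (a b : V),
    f (u ++ (r *: a + b) :: w) = r *: f (u ++ a :: w) + f (u ++ b :: w).

Definition fsum_eval (W : lmodType k) (f : seq V -> W) (e : fsum) : W :=
  \sum_(t <- e) t.1 *: f t.2.

Definition tequiv (e1 e2 : fsum) : Prop :=
  forall (W : lmodType k) (f : seq V -> W),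
    multilin f -> fsum_eval f e1 = fsum_eval f e2.

Definition tequivb (e1 e2 : fsum) : bool :=
  if excluded_middle_informative (tequiv e1 e2) then true else false.

Lemma tequivbP e1 e2 : reflect (tequiv e1 e2) (tequivb e1 e2).
Proof.
rewrite /tequivb; case: excluded_middle_informative => H; constructor => //.
Qed.

Lemma tequivb_is_equiv : equiv_class_of tequivb.
Proof.
split.
- by move=> x; apply/tequivbP.
- move=> x y; apply/idP/idP => /tequivbP H; apply/tequivbP => W f Hf;
  by rewrite H.
- move=> y x z /tequivbP H1 /tequivbP H2; apply/tequivbP => W f Hf.
  by rewrite H1 ?H2.
Qed.

Canonical tequivb_equiv := EquivRelPack tequivb_is_equiv.
Canonical tequivb_encModRel := defaultEncModRel tequivb.

Definition Tplus := {eq_quot tequivb}.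
HB.instance Definition _ : EqQuotient fsum tequivb Tplus := EqQuotient.on Tplus.
HB.instance Definition _ := Choice.on Tplus.

Lemma fsum_eval_cat (W : lmodType k) (f : seq V -> W) e1 e2 :
  fsum_eval f (e1 ++ e2) = fsum_eval f e1 + fsum_eval f e2.
Proof. by rewrite /fsum_eval big_cat. Qed.

Definition fscale (c : k) (e : fsum) : fsum := [seq (c * t.1, t.2) | t <- e].

Lemma fsum_eval_scale (W : lmodType k) (f : seq V -> W) c e :
  fsum_eval f (fscale c e) = c *: fsum_eval f e.
Proof.
rewrite /fsum_eval big_map scaler_sumr; apply: eq_bigr => t _ /=.
by rewrite scalerA.
Qed.

Lemma tequiv_repr (e : fsum) : tequiv (repr (\pi_Tplus e)) e.
Proof. by apply/tequivbP; rewrite -eqmodE reprK. Qed.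

Lemma fsum_eval_repr (W : lmodType k) (f : seq V -> W) e :
  multilin f -> fsum_eval f (repr (\pi_Tplus e)) = fsum_eval f e.
Proof. by move=> Hf; apply: tequiv_repr. Qed.

Lemma pi_tequiv (e1 e2 : fsum) : tequiv e1 e2 -> \pi_Tplus e1 = \pi_Tplus e2.
Proof. by move=> H; apply/eqmodP/tequivbP. Qed.

Definition tzero : Tplus := \pi_Tplus [::].
Definition tadd (x y : Tplus) : Tplus := \pi_Tplus (repr x ++ repr y).
Definition tscale (c : k) (x : Tplus) : Tplus := \pi_Tplus (fscale c (repr x)).
Definition topp (x : Tplus) : Tplus := tscale (-1) x.

Lemma tequiv_cat e1 e2 e1' e2' :
  tequiv e1 e1' -> tequiv e2 e2' -> tequiv (e1 ++ e2) (e1' ++ e2').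
Proof. by move=> H1 H2 W f Hf; rewrite !fsum_eval_cat H1 ?H2. Qed.

Lemma tequiv_scale c e e' : tequiv e e' -> tequiv (fscale c e) (fscale c e').
Proof. by move=> H W f Hf; rewrite !fsum_eval_scale H. Qed.

Lemma tadd_pi e1 e2 : tadd (\pi_Tplus e1) (\pi_Tplus e2) = \pi_Tplus (e1 ++ e2).
Proof. by apply: pi_tequiv; apply: tequiv_cat; apply: tequiv_repr. Qed.

Lemma tscale_pi c e : tscale c (\pi_Tplus e) = \pi_Tplus (fscale c e).
Proof. by apply: pi_tequiv; apply: tequiv_scale; apply: tequiv_repr. Qed.

Lemma taddA : associative tadd.
Proof.
move=> x y z; elim/quotW: x => x; elim/quotW: y => y; elim/quotW: z => z.
rewrite !tadd_pi; apply: pi_tequiv => W f Hf.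
by rewrite !fsum_eval_cat !fsum_eval_repr // addrA.
Qed.

Lemma taddC : commutative tadd.
Proof.
move=> x y; elim/quotW: x => x; elim/quotW: y => y; rewrite !tadd_pi; apply: pi_tequiv => W f Hf.
by rewrite !fsum_eval_cat addrC.
Qed.

Lemma tadd0 : left_id tzero tadd.
Proof. by move=> x; elim/quotW: x => x; rewrite /tzero tadd_pi. Qed.

Lemma taddN : left_inverse tzero topp tadd.
Proof.
move=> x; elim/quotW: x => x; rewrite /topp tscale_pi tadd_pi; apply: pi_tequiv => W f Hf.
rewrite fsum_eval_cat fsum_eval_scale scaleN1r addNr.
by rewrite /fsum_eval big_nil.
Qed.

HB.instance Definition _ := GRing.isZmodule.Build Tplus taddA taddC tadd0 taddN.

Lemma taddE (x y : Tplus) : x + y = tadd x y. Proof. by []. Qed.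

Ltac tsolve := apply: pi_tequiv => W f Hf;
  rewrite ?(fsum_eval_scale, fsum_eval_cat, fsum_eval_repr) //.

Lemma tscaleA a b (v : Tplus) : tscale a (tscale b v) = tscale (a * b) v.
Proof.
elim/quotW: v => v; rewrite !tscale_pi; tsolve.
by rewrite scalerA.
Qed.

Lemma tscale1 : left_id 1 tscale.
Proof.
move=> v; elim/quotW: v => v; rewrite !tscale_pi; tsolve.
by rewrite scale1r.
Qed.

Lemma tscaleDr : right_distributive tscale +%R.
Proof.
move=> a x y; elim/quotW: x => x; elim/quotW: y => y; rewrite !taddE.
rewrite !tadd_pi !tscale_pi; tsolve.
by rewrite scalerDr.
Qed.

Lemma tscaleDl (v : Tplus) : {morph tscale^~ v : a b / a + b}.
Proof.
move=> a b; elim/quotW: v => v; rewrite taddE !tscale_pi tadd_pi; tsolve.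
by rewrite scalerDl.
Qed.

HB.instance Definition _ :=
  GRing.Zmodule_isLmodule.Build k Tplus tscaleA tscale1 tscaleDr tscaleDl.

End TensorPlus.

Section TensorOps.
Variables (k : comPzRingType) (V : lmodType k).

(* [shuffle s t] lists (with multiplicity) the words of s *_0 t:
   1 *_0 t = t,  s *_0 1 = s,
   (a::s') *_0 (b::t') = a::(s' *_0 (b::t')) + b::((a::s') *_0 t'). *)
Fixpoint shuffle (s t : seq V) {struct s} : seq (seq V) :=
  match s with
  | [::] => [:: t]
  | a :: s' =>
    let fix sh (t : seq V) : seq (seq V) :=
      match t with
      | [::] => [:: s]
      | b :: t' => map (cons a) (shuffle s' t) ++ map (cons b) (sh t')
      end in sh t
  end.

(* on nonempty words: (a_1::a') prec b = a_1 (x) (a' *_0 b);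
                      a succ (b_1::b') = b_1 (x) (a *_0 b').
   The empty word represents 0 in T^+(V), so it is sent to 0. *)
Definition word_prec (s t : seq V) : seq (seq V) :=
  if t is [::] then [::] else
  if s is a :: s' then map (cons a) (shuffle s' t) else [::].

Definition word_succ (s t : seq V) : seq (seq V) :=
  if s is [::] then [::] else
  if t is b :: t' then map (cons b) (shuffle s t') else [::].

Definition fbilin (op : seq V -> seq V -> seq (seq V)) (e1 e2 : fsum V) : fsum V :=
  flatten [seq [seq (t.1 * u.1, w) | w <- op t.2 u.2] | t <- e1, u <- e2].

Variables (lambda : k) (d0 : V -> V).

(* d_V(a_1 (x) ... (x) a_m) =
     sum_{X nonempty subset of {1..m}} lambda^(|X|-1) c^X_1 (x) ... (x) c^X_m,
   c^X_i = d0 a_i if i in X, a_i otherwise (indices are 0-based here). *)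
Definition dword (w : seq V) : fsum V :=
  [seq (lambda ^+ #|X|.-1,
        [seq (if i \in X then d0 (nth 0 w i) else nth 0 w i) | i : 'I_(size w)])
  | X : {set 'I_(size w)} <- enum [set X : {set 'I_(size w)} | X != set0]].

Definition fdiff (e : fsum V) : fsum V :=
  flatten [seq [seq (t.1 * u.1, u.2) | u <- dword t.2] | t <- e].

End TensorOps.

Section TplusOps.
Variables (k : comPzRingType) (V : lmodType k).

Definition precV (x y : Tplus V) : Tplus V :=
  \pi_(Tplus V) (fbilin (@word_prec k V) (repr x) (repr y)).

Definition succV (x y : Tplus V) : Tplus V :=
  \pi_(Tplus V) (fbilin (@word_succ k V) (repr x) (repr y)).

Definition dV (lambda : k) (d0 : V -> V) (x : Tplus V) : Tplus V :=
  \pi_(Tplus V) (fdiff lambda d0 (repr x)).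

Definition jV (v : V) : Tplus V := \pi_(Tplus V) [:: (1, [:: v])].

End TplusOps.

(* T^+(V) is the quotient of formal sums of words by the relation "same value
   under every multilinear map on words", so an identity between classes holds
   once it holds after evaluation by an arbitrary multilinear [f].  The
   dendriform axioms and commutativity thereby become identities between sums
   over shuffles of words, which follow from commutativity and associativity of
   the shuffle product.  The weighted Leibniz rule for d_V is proved on words by
   induction on the total length: for the half shuffle (a :: s) < t it reduces to
   the rule for the shuffle of s and t, and the shuffle splits into two half
   shuffles.  The free extension of psi sends a_1 ... a_m to
   psi a_1 < (psi a_2 < ( ... < psi a_m)), which is multilinear, hence defined on
   T^+(V), and is forced because a_1 a_2 ... a_m = j_V(a_1) < a_2 ... a_m. *)

From HB Require Import structures.
From mathcomp Require Import all_boot all_algebra.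
From mathcomp Require Import zify.
From Stdlib Require Import FunctionalExtensionality.

Set Implicit Arguments.
Unset Strict Implicit.
Unset Printing Implicit Defensive.
Import GRing.Theory.
Local Open Scope ring_scope.
Local Open Scope quotient_scope.
Local Arguments shuffle : simpl never.

Section Shuffle.
Variables (k : comPzRingType) (V : lmodType k).
Implicit Types (W : zmodType) (s t x y z : seq V).

Definition wsum W (f : seq V -> W) (L : seq (seq V)) : W := \sum_(w <- L) f w.

Lemma wsum_nil W (f : seq V -> W) : wsum f [::] = 0.
Proof. by rewrite /wsum big_nil. Qed.

Lemma wsum1 W (f : seq V -> W) w : wsum f [:: w] = f w.
Proof. by rewrite /wsum big_seq1. Qed.

Lemma wsum_cat W (f : seq V -> W) L1 L2 : wsum f (L1 ++ L2) = wsum f L1 + wsum f L2.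
Proof. by rewrite /wsum big_cat. Qed.

Lemma wsum_map_cons W (f : seq V -> W) a L :
  wsum f (map (cons a) L) = wsum (fun w => f (a :: w)) L.
Proof. by rewrite /wsum big_map. Qed.

Lemma eq_wsum W (f g : seq V -> W) L : f =1 g -> wsum f L = wsum g L.
Proof. by move=> fg; apply: eq_bigr => w _. Qed.

Lemma eq_wsum_in W (f g : seq V -> W) L : {in L, f =1 g} -> wsum f L = wsum g L.
Proof. by move=> fg; apply: eq_big_seq. Qed.

Lemma wsum_eq0 W (f : seq V -> W) L : f =1 (fun _ => 0) -> wsum f L = 0.
Proof. by move=> f0; rewrite /wsum big1. Qed.

Lemma wsumD W (f g : seq V -> W) L : wsum (fun w => f w + g w) L = wsum f L + wsum g L.
Proof. by rewrite /wsum big_split. Qed.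

Lemma shuffle_nil_l t : shuffle [::] t = [:: t].
Proof. by []. Qed.

Lemma shuffle_nil_r s : shuffle s [::] = [:: s].
Proof. by case: s. Qed.

Lemma shuffle_cons a b s t : shuffle (a :: s) (b :: t) =
  map (cons a) (shuffle s (b :: t)) ++ map (cons b) (shuffle (a :: s) t).
Proof. by []. Qed.

Lemma size_shuffle s t w : w \in shuffle s t -> size w = (size s + size t)%N.
Proof.
elim: s t w => [|a s IHs] t w; first by rewrite inE => /eqP ->.
elim: t w => [|b t IHt] w; first by rewrite shuffle_nil_r inE addn0 => /eqP ->.
rewrite shuffle_cons mem_cat => /orP[] /mapP[u + ->] /=.
  by move/IHs ->.
by move/IHt ->; rewrite addnS.
Qed.

Definition on_tail W (F : (seq V -> W) -> seq V -> W) (f : seq V -> W) s : W :=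
  if s is a :: s' then F (fun w => f (a :: w)) s' else 0.

Lemma wsum_shuffle_rec W (f : seq V -> W) s t : (s != [::]) || (t != [::]) ->
  wsum f (shuffle s t) =
  on_tail (fun g s' => wsum g (shuffle s' t)) f s +
  on_tail (fun g t' => wsum g (shuffle s t')) f t.
Proof.
case: s => [|a s]; case: t => [|b t] // _; rewrite /on_tail.
- by rewrite !wsum1 add0r.
- by rewrite !shuffle_nil_r !wsum1 addr0.
- by rewrite shuffle_cons wsum_cat !wsum_map_cons.
Qed.

Lemma wsum_shuffleC W (f : seq V -> W) s t : wsum f (shuffle s t) = wsum f (shuffle t s).
Proof.
elim: s t W f => [|a s IHs] t W f; first by rewrite shuffle_nil_r.
elim: t W f => [|b t IHt] W f; first by rewrite shuffle_nil_r.
rewrite !shuffle_cons !wsum_cat !wsum_map_cons addrC IHs.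
by congr (_ + _); rewrite IHt.
Qed.

Definition shuffle3 W (f : seq V -> W) x y z :=
  wsum (fun w => wsum f (shuffle w z)) (shuffle x y).

Lemma shuffle3_rec W (f : seq V -> W) x y z :
  [|| x != [::], y != [::] | z != [::]] ->
  shuffle3 f x y z = on_tail (fun g x' => shuffle3 g x' y z) f x +
                     on_tail (fun g y' => shuffle3 g x y' z) f y +
                     on_tail (fun g z' => shuffle3 g x y z') f z.
Proof.
have rec w z0 g : w != [::] -> wsum g (shuffle w z0) =
    on_tail (fun g s' => wsum g (shuffle s' z0)) g w +
    on_tail (fun g t' => wsum g (shuffle w t')) g z0.
  by move=> nzw; rewrite wsum_shuffle_rec // nzw.
rewrite /shuffle3 /on_tail; case: x => [|a x]; case: y => [|b y] nz.
- by case: z nz => [|c z] // _; rewrite !shuffle_nil_l !wsum1 !add0r.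
- by rewrite shuffle_nil_l !wsum1 rec // add0r; case: z {nz} => [|c z] //; rewrite wsum1.
- by rewrite !shuffle_nil_r !wsum1 rec // addr0; case: z {nz} => [|c z] //; rewrite wsum1.
rewrite shuffle_cons wsum_cat !wsum_map_cons.
rewrite (eq_wsum _ (fun w => rec _ (a :: w) z _ isT)).
rewrite (eq_wsum (shuffle (a :: x) y) (fun w => rec _ (b :: w) z _ isT)) /=.
rewrite !wsumD -!addrA; congr (_ + _); rewrite addrCA; congr (_ + _).
case: z {nz} => [|c z] /=; first by rewrite !wsum_eq0 ?addr0.
by rewrite wsum_cat !wsum_map_cons.
Qed.

(* Both sides obey the same three-term recursion [shuffle3_rec]. *)
Lemma shuffle3C W (f : seq V -> W) x y z : shuffle3 f x y z = shuffle3 f z y x.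
Proof.
move: {2}(size x + size y + size z)%N (leqnn (size x + size y + size z)) => n.
elim: n W f x y z => [|n IH] W f x y z Hn.
  by case: x y z Hn => [|? ?] [|? ?] [|? ?].
case/boolP: [|| x != [::], y != [::] | z != [::]] => nz; last first.
  by case: x y z nz {Hn} => [|? ?] [|? ?] [|? ?].
rewrite shuffle3_rec // shuffle3_rec; last by case: x y z nz {Hn} => [|? ?] [|? ?] [|? ?].
rewrite [RHS]addrC [X in _ = _ + X]addrC addrA; congr (_ + _ + _).
- by case: x Hn {nz} => [|a x] //= Hn; apply: IH; move: Hn => /=; lia.
- by case: y Hn {nz} => [|b y] //= Hn; apply: IH; move: Hn => /=; lia.
- by case: z Hn {nz} => [|c z] //= Hn; apply: IH; move: Hn => /=; lia.
Qed.

Lemma wsum_shuffleA W (f : seq V -> W) x y z :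
  wsum (fun w => wsum f (shuffle w z)) (shuffle x y) =
  wsum (fun w => wsum f (shuffle x w)) (shuffle y z).
Proof.
rewrite -/(shuffle3 f x y z) shuffle3C /shuffle3 wsum_shuffleC.
by apply: eq_wsum => w; rewrite wsum_shuffleC.
Qed.

Lemma word_prec0l t : word_prec [::] t = [::].
Proof. by case: t. Qed.

Lemma word_prec0r s : word_prec s [::] = [::].
Proof. by []. Qed.

Lemma word_succ0l t : word_succ [::] t = [::].
Proof. by []. Qed.

Lemma word_succ0r s : word_succ s [::] = [::].
Proof. by case: s. Qed.

Lemma word_prec_cons a s t : t != [::] ->
  word_prec (a :: s) t = map (cons a) (shuffle s t).
Proof. by case: t. Qed.

Lemma word_succ_cons s b t : s != [::] ->
  word_succ s (b :: t) = map (cons b) (shuffle s t).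
Proof. by case: s. Qed.

Lemma wsum_word_succ W (f : seq V -> W) s t : wsum f (word_succ s t) = wsum f (word_prec t s).
Proof.
case: s => [|a s]; case: t => [|b t] //=.
by rewrite !wsum_map_cons wsum_shuffleC.
Qed.

Lemma wsum_shuffle_prec W (f : seq V -> W) s t : s != [::] -> t != [::] ->
  wsum f (shuffle s t) = wsum f (word_prec s t) + wsum f (word_prec t s).
Proof.
case: s => [|a s] // _; case: t => [|b t] // _.
by rewrite shuffle_cons wsum_cat /= !wsum_map_cons [X in _ + X]wsum_shuffleC.
Qed.

Lemma nonempty_size (x w : seq V) : w != [::] -> size x = size w -> x != [::].
Proof. by move=> nzw sz; rewrite -size_eq0 sz size_eq0. Qed.

Lemma nonempty_shuffle_r s b t w : w \in shuffle s (b :: t) -> w != [::].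
Proof. by move/size_shuffle; case: w => //=; rewrite addnS. Qed.

Lemma wsum_word_precA W (f : seq V -> W) x y z :
  wsum (fun w => wsum f (word_prec w z)) (word_prec x y) =
  wsum (fun w => wsum f (word_prec x w)) (word_prec y z) +
  wsum (fun w => wsum f (word_prec x w)) (word_succ y z).
Proof.
case: z => [|c z].
  by rewrite word_prec0r word_succ0r !wsum_nil addr0 wsum_eq0 // => w; rewrite wsum_nil.
case: y => [|b y]; first by rewrite word_prec0r word_prec0l word_succ0l !wsum_nil addr0.
case: x => [|a x].
  by rewrite word_prec0l wsum_nil !wsum_eq0 ?addr0 // => w; rewrite word_prec0l wsum_nil.
rewrite wsum_word_succ -wsum_shuffle_prec // word_prec_cons // wsum_map_cons.
under eq_wsum do rewrite word_prec_cons // wsum_map_cons.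
rewrite wsum_shuffleA; apply: eq_wsum_in => w /nonempty_shuffle_r nzw.
by rewrite word_prec_cons // wsum_map_cons.
Qed.

Lemma wsum_word_succ_prec W (f : seq V -> W) x y z :
  wsum (fun w => wsum f (word_prec w z)) (word_succ x y) =
  wsum (fun w => wsum f (word_succ x w)) (word_prec y z).
Proof.
case: z => [|c z].
  by rewrite word_prec0r wsum_nil wsum_eq0 // => w; rewrite word_prec0r wsum_nil.
case: y => [|b y]; first by rewrite word_succ0r word_prec0l !wsum_nil.
case: x => [|a x]; first by rewrite word_succ0l wsum_nil wsum_eq0 // => w; rewrite wsum_nil.
rewrite /= !wsum_map_cons.
under eq_wsum do rewrite wsum_map_cons.
under [RHS]eq_wsum do rewrite wsum_map_cons.
by rewrite wsum_shuffleA.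
Qed.

Lemma wsum_word_succA W (f : seq V -> W) x y z :
  wsum (fun w => wsum f (word_succ w z)) (word_prec x y) +
  wsum (fun w => wsum f (word_succ w z)) (word_succ x y) =
  wsum (fun w => wsum f (word_succ x w)) (word_succ y z).
Proof.
case: z => [|c z].
  by rewrite word_succ0r wsum_nil !wsum_eq0 ?addr0 // => w; rewrite word_succ0r wsum_nil.
case: y => [|b y]; first by rewrite word_prec0r word_succ0r word_succ0l !wsum_nil addr0.
case: x => [|a x].
  by rewrite word_prec0l word_succ0l !wsum_nil add0r wsum_eq0 // => w; rewrite word_succ0l wsum_nil.
rewrite [X in _ + X]wsum_word_succ -wsum_shuffle_prec //.
rewrite word_succ_cons // wsum_map_cons.
under [RHS]eq_wsum do rewrite word_succ_cons // wsum_map_cons.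
rewrite -wsum_shuffleA; apply: eq_wsum_in => w /nonempty_shuffle_r nzw.
by rewrite word_succ_cons // wsum_map_cons.
Qed.

End Shuffle.

Section Multilinear.
Variables (k : comPzRingType) (V : lmodType k).
Implicit Types (W : lmodType k) (s t : seq V).

Definition mlinear W (f : seq V -> W) : Prop :=
  forall (u w : seq V) (r : k) (a b : V),
    f (u ++ (r *: a + b) :: w) = r *: f (u ++ a :: w) + f (u ++ b :: w).

Lemma mlinear_cons W (f : seq V -> W) c : mlinear f -> mlinear (fun w => f (c :: w)).
Proof. by move=> Hf u; apply: (Hf (c :: u)). Qed.

Lemma wsumZ W (f : seq V -> W) c L : wsum (fun w => c *: f w) L = c *: wsum f L.
Proof. by rewrite /wsum scaler_sumr. Qed.

Lemma wsum_mlinear_head W (f : seq V -> W) L r a b : mlinear f ->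
  wsum (fun w => f ((r *: a + b) :: w)) L =
  r *: wsum (fun w => f (a :: w)) L + wsum (fun w => f (b :: w)) L.
Proof. by move=> Hf; rewrite -wsumZ -wsumD; apply: eq_wsum => w; apply: (Hf [::]). Qed.

Lemma mlinear_shuffle_l W (f : seq V -> W) t :
  mlinear f -> mlinear (fun s => wsum f (shuffle s t)).
Proof.
move=> Hf u; elim: u t W f Hf => [|y u IHu] t W f Hf v r a b;
  elim: t W f Hf => [|c t IHt] W f Hf /=.
- by rewrite !shuffle_nil_r !wsum1; apply: (Hf [::]).
- rewrite !shuffle_cons !wsum_cat !wsum_map_cons wsum_mlinear_head //.
  by rewrite IHt; [rewrite scalerDr addrACA | apply: mlinear_cons].
- by rewrite !shuffle_nil_r !wsum1; apply: (Hf (y :: u)).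
- rewrite !shuffle_cons !wsum_cat !wsum_map_cons IHu; last exact: mlinear_cons.
  by rewrite -!cat_cons IHt; [rewrite scalerDr addrACA | apply: mlinear_cons].
Qed.

Lemma mlinear_shuffle_r W (f : seq V -> W) s :
  mlinear f -> mlinear (fun t => wsum f (shuffle s t)).
Proof.
by move=> Hf u v r a b; rewrite !(wsum_shuffleC _ s); apply: mlinear_shuffle_l.
Qed.

Lemma multilin_word_prec_l W (f : seq V -> W) t :
  multilin f -> multilin (fun s => wsum f (word_prec s t)).
Proof.
move=> [_ Hf]; split; first by rewrite word_prec0l wsum_nil.
have [-> u v r a b|nzt [|y u] v r a b] := eqVneq t [::].
  by rewrite !word_prec0r !wsum_nil scaler0 addr0.
- by rewrite /= !word_prec_cons // !wsum_map_cons wsum_mlinear_head.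
- by rewrite /= !word_prec_cons // !wsum_map_cons; apply/mlinear_shuffle_l/mlinear_cons.
Qed.

Lemma multilin_word_prec_r W (f : seq V -> W) s :
  multilin f -> multilin (fun t => wsum f (word_prec s t)).
Proof.
move=> [_ Hf]; split=> [|u v r a b]; first by rewrite word_prec0r wsum_nil.
case: s => [|c s]; first by rewrite !word_prec0l !wsum_nil scaler0 addr0.
rewrite !word_prec_cons; try by case: u.
by rewrite !wsum_map_cons; apply/mlinear_shuffle_r/mlinear_cons.
Qed.

Lemma multilin_word_succ_l W (f : seq V -> W) t :
  multilin f -> multilin (fun s => wsum f (word_succ s t)).
Proof.
move=> /(multilin_word_prec_r t) [H0 H].
by split=> [|u v r a b]; rewrite !wsum_word_succ; [exact: H0 | exact: H].
Qed.

Lemma multilin_word_succ_r W (f : seq V -> W) s :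
  multilin f -> multilin (fun t => wsum f (word_succ s t)).
Proof.
move=> /(multilin_word_prec_l s) [H0 H].
by split=> [|u v r a b]; rewrite !wsum_word_succ; [exact: H0 | exact: H].
Qed.

End Multilinear.

Section DWord.
Variables (k : comPzRingType) (V : lmodType k) (lambda : k) (d0 : V -> V).
Implicit Types (W : lmodType k) (w : seq V).

Definition dmarked w (X : {set 'I_(size w)}) : seq V :=
  [seq (if i \in X then d0 w`_i else w`_i) | i : 'I_(size w)].

Definition dsum W (f : seq V -> W) w : W := fsum_eval f (dword lambda d0 w).

Lemma dsumE W (f : seq V -> W) w :
  dsum f w = \sum_(X : {set 'I_(size w)} | X != set0) lambda ^+ #|X|.-1 *: f (dmarked X).
Proof.
rewrite /dsum /fsum_eval /dword big_map big_enum /=.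
by apply: eq_bigl => X; rewrite inE.
Qed.

Definition liftset n (Y : {set 'I_n}) : {set 'I_n.+1} := [set lift ord0 i | i in Y].
Definition unliftset n (X : {set 'I_n.+1}) : {set 'I_n} := [set i | lift ord0 i \in X].

Lemma mem_liftset n (Y : {set 'I_n}) i : (lift ord0 i \in liftset Y) = (i \in Y).
Proof. by rewrite mem_imset //; apply: lift_inj. Qed.

Lemma ord0_liftset n (Y : {set 'I_n}) : ord0 \notin liftset Y.
Proof. by apply/imsetP => -[j _] /eqP; rewrite (negbTE (neq_lift _ _)). Qed.

Lemma card_liftset n (Y : {set 'I_n}) : #|liftset Y| = #|Y|.
Proof. by rewrite card_imset //; apply: lift_inj. Qed.

Lemma liftsetK n : cancel (@liftset n) (@unliftset n).
Proof. by move=> Y; apply/setP => i; rewrite inE mem_liftset. Qed.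

Lemma unliftsetU1 n (Y : {set 'I_n}) : unliftset (ord0 |: liftset Y) = Y.
Proof.
apply/setP => i; rewrite inE in_setU1 mem_liftset.
by rewrite eq_sym (negbTE (neq_lift _ _)).
Qed.

Lemma unliftsetK n (X : {set 'I_n.+1}) : ord0 \notin X -> liftset (unliftset X) = X.
Proof.
move=> X0; apply/setP => x; case: (unliftP ord0 x) => [j ->|->].
  by rewrite mem_liftset inE.
by rewrite (negbTE X0) (negbTE (ord0_liftset _)).
Qed.

Lemma unliftsetU1K n (X : {set 'I_n.+1}) : ord0 \in X -> ord0 |: liftset (unliftset X) = X.
Proof.
move=> X0; apply/setP => x; rewrite in_setU1; case: (unliftP ord0 x) => [j ->|->].
  by rewrite eq_sym (negbTE (neq_lift _ _)) mem_liftset inE.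
by rewrite eqxx X0.
Qed.

Lemma dmarked0 w : dmarked (set0 : {set 'I_(size w)}) = w.
Proof.
rewrite /dmarked /image_mem; under eq_map do rewrite inE.
by rewrite (map_comp (nth 0 w) val) val_enum_ord -/(mkseq _ _) mkseq_nth.
Qed.

Lemma dmarked_cons a w (Y : {set 'I_(size w)}) (b : bool) :
  @dmarked (a :: w) (if b then ord0 |: liftset Y else liftset Y) =
  (if b then d0 a else a) :: dmarked Y.
Proof.
rewrite /dmarked /image_mem enum_ordSl map_cons -map_comp; congr (_ :: _).
  by case: b; rewrite ?setU11 // (negbTE (ord0_liftset _)).
apply: eq_map => i /=; case: b; rewrite ?in_setU1 ?(eq_sym _ ord0) ?(negbTE (neq_lift _ _)) /=;
  by rewrite mem_liftset.
Qed.

Lemma dsum_nil W (f : seq V -> W) : dsum f [::] = 0.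
Proof.
rewrite dsumE big_pred0 // => X.
by apply/negbTE; rewrite negbK; apply/eqP/setP => -[].
Qed.

Lemma dsum_cons W (f : seq V -> W) a w :
  dsum f (a :: w) = f (d0 a :: w) + dsum (fun x => f (a :: x)) w
                    + lambda *: dsum (fun x => f (d0 a :: x)) w.
Proof.
rewrite !dsumE (bigID (fun X : {set 'I_(size w).+1} => ord0 \in X)) /=.
have -> : \sum_(X : {set 'I_(size w).+1} | (X != set0) && (ord0 \in X))
      lambda ^+ #|X|.-1 *: f (@dmarked (a :: w) X) =
   \sum_(Y : {set 'I_(size w)}) lambda ^+ #|Y| *: f (d0 a :: dmarked Y).
  rewrite (eq_bigl (fun X : {set 'I_(size w).+1} => ord0 \in X)); last first.
    by move=> X; case X0: (ord0 \in X); rewrite ?andbT ?andbF //; apply/set0Pn; exists ord0.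
  rewrite (reindex_onto (fun Y => ord0 |: liftset Y) (@unliftset _)); last first.
    by move=> X; apply: unliftsetU1K.
  apply: eq_big => [Y|Y _]; first by rewrite setU11 unliftsetU1 eqxx.
  by rewrite (dmarked_cons _ _ true) cardsU1 ord0_liftset card_liftset.
have -> : \sum_(X : {set 'I_(size w).+1} | (X != set0) && (ord0 \notin X))
      lambda ^+ #|X|.-1 *: f (@dmarked (a :: w) X) =
   \sum_(Y : {set 'I_(size w)} | Y != set0) lambda ^+ #|Y|.-1 *: f (a :: dmarked Y).
  rewrite (reindex_onto (@liftset _) (@unliftset _)); last first.
    by move=> X /andP[_]; apply: unliftsetK.
  apply: eq_big => [Y|Y _].
    by rewrite liftsetK eqxx ord0_liftset -!card_gt0 card_liftset !andbT.
  by rewrite (dmarked_cons _ _ false) card_liftset.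
rewrite (bigD1 set0) //= cards0 expr0 scale1r dmarked0 -!addrA; congr (_ + _).
rewrite addrC; congr (_ + _); rewrite scaler_sumr; apply: eq_bigr => Y nzY.
by rewrite scalerA -exprS prednK // card_gt0.
Qed.

Lemma eq_dsum_size W (f g : seq V -> W) w :
  (forall x, size x = size w -> f x = g x) -> dsum f w = dsum g w.
Proof.
move=> fg; rewrite !dsumE; apply: eq_bigr => X _; rewrite fg //.
by rewrite size_map -cardE card_ord.
Qed.

Lemma eq_dsum W (f g : seq V -> W) w : f =1 g -> dsum f w = dsum g w.
Proof. by move=> fg; apply: eq_dsum_size => x _. Qed.

Lemma dsumD W (f g : seq V -> W) w : dsum (fun x => f x + g x) w = dsum f w + dsum g w.
Proof. by rewrite /dsum /fsum_eval -big_split; apply: eq_bigr => p _; apply: scalerDr. Qed.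

Lemma dsumZ W (f : seq V -> W) c w : dsum (fun x => c *: f x) w = c *: dsum f w.
Proof.
rewrite /dsum /fsum_eval scaler_sumr; apply: eq_bigr => p _.
by rewrite !scalerA mulrC.
Qed.

Lemma dsum_eq0 W (f : seq V -> W) w : f =1 (fun _ => 0) -> dsum f w = 0.
Proof. by move=> f0; rewrite /dsum /fsum_eval big1 // => p _; rewrite f0 scaler0. Qed.

Lemma dsumC W (f : seq V -> seq V -> W) s t :
  dsum (fun x => dsum (f x) t) s = dsum (fun y => dsum (f^~ y) s) t.
Proof.
rewrite /dsum /fsum_eval; under eq_bigr do rewrite scaler_sumr.
rewrite exchange_big; apply: eq_bigr => q _; rewrite scaler_sumr.
by apply: eq_bigr => p _; rewrite !scalerA mulrC.
Qed.

Lemma dsum_mlinear_head W (f : seq V -> W) w r a b : mlinear f ->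
  dsum (fun x => f ((r *: a + b) :: x)) w =
  r *: dsum (fun x => f (a :: x)) w + dsum (fun x => f (b :: x)) w.
Proof. by move=> Hf; rewrite -dsumZ -dsumD; apply: eq_dsum => x; apply: (Hf [::]). Qed.

Lemma addrACA3 (M : zmodType) (x1 x2 y1 y2 z1 z2 : M) :
  x1 + x2 + (y1 + y2) + (z1 + z2) = x1 + y1 + z1 + (x2 + y2 + z2).
Proof. by rewrite (addrACA x1 x2 y1 y2) (addrACA (x1 + y1) (x2 + y2) z1 z2). Qed.

Hypothesis d0_linear : linear d0.

Lemma mlinear_dsum W (f : seq V -> W) : mlinear f -> mlinear (dsum f).
Proof.
move=> Hf u; elim: u W f Hf => [|y u IH] W f Hf v r a b.
- rewrite /= !dsum_cons d0_linear (Hf [::]) !dsum_mlinear_head //.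
  by rewrite !scalerDr !scalerA (mulrC lambda r) -!scalerA addrACA3.
- rewrite /= !dsum_cons -!cat_cons (Hf (d0 y :: u)) IH; last exact: mlinear_cons.
  rewrite IH; last exact: mlinear_cons.
  by rewrite !scalerDr !scalerA mulrC -scalerA addrACA3.
Qed.

Lemma multilin_dsum W (f : seq V -> W) : multilin f -> multilin (dsum f).
Proof. by move=> [_ Hf]; split; [apply: dsum_nil | apply: mlinear_dsum]. Qed.

End DWord.

Section Leibniz.
Variables (k : comPzRingType) (V : lmodType k) (lambda : k) (d0 : V -> V).
Implicit Types (W : lmodType k) (s t : seq V).
Local Notation dsum := (dsum lambda d0).

Definition leibniz_rule (op : seq V -> seq V -> seq (seq V)) W (f : seq V -> W) s t :=
  wsum (dsum f) (op s t) =
  dsum (fun x => wsum f (op x t)) s + dsum (fun y => wsum f (op s y)) t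
  + lambda *: dsum (fun x => dsum (fun y => wsum f (op x y)) t) s.

Lemma dsum_word_prec_cons W (f : seq V -> W) c x t : t != [::] ->
  dsum (fun y => wsum f (word_prec (c :: x) y)) t =
  dsum (fun y => wsum (fun w => f (c :: w)) (shuffle x y)) t.
Proof.
move=> nzt; apply: eq_dsum_size => y sz_y.
by rewrite word_prec_cons ?wsum_map_cons ?(nonempty_size nzt sz_y).
Qed.

Lemma leibniz_prec_cons a s t : t != [::] ->
    (forall W (f : seq V -> W), leibniz_rule (@shuffle k V) f s t) ->
  forall W (f : seq V -> W), leibniz_rule (@word_prec k V) f (a :: s) t.
Proof.
move=> nzt IH W f; rewrite /leibniz_rule word_prec_cons // wsum_map_cons.
under eq_wsum do rewrite dsum_cons.
rewrite !wsumD wsumZ !IH !dsum_cons /=.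
rewrite (word_prec_cons (d0 a) s nzt) wsum_map_cons !dsum_word_prec_cons //.
under [dsum (fun x => wsum f (word_prec (a :: x) t)) s]eq_dsum
  do rewrite word_prec_cons // wsum_map_cons.
under [dsum (fun x => wsum f (word_prec (d0 a :: x) t)) s]eq_dsum
  do rewrite word_prec_cons // wsum_map_cons.
under [dsum (fun x => dsum (fun y => wsum f (word_prec (a :: x) y)) t) s]eq_dsum
  do rewrite dsum_word_prec_cons //.
under [dsum (fun x => dsum (fun y => wsum f (word_prec (d0 a :: x) y)) t) s]eq_dsum
  do rewrite dsum_word_prec_cons //.
rewrite !scalerDr -!addrA; congr (_ + (_ + _)).
rewrite [RHS]addrCA; congr (_ + _).
by rewrite [LHS]addrCA [X in _ + X = _]addrCA.
Qed.

Lemma leibniz_shuffle0l W (f : seq V -> W) t : leibniz_rule (@shuffle k V) f [::] t.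
Proof.
rewrite /leibniz_rule shuffle_nil_l wsum1 !dsum_nil scaler0 addr0 add0r.
by apply: eq_dsum => y; rewrite shuffle_nil_l wsum1.
Qed.

Lemma leibniz_shuffle0r W (f : seq V -> W) s : leibniz_rule (@shuffle k V) f s [::].
Proof.
rewrite /leibniz_rule shuffle_nil_r wsum1 dsum_nil addr0.
rewrite [X in lambda *: X]dsum_eq0 => [|x]; last exact: dsum_nil.
by rewrite scaler0 addr0; apply: eq_dsum => x; rewrite shuffle_nil_r wsum1.
Qed.

Lemma leibniz_shuffle W (f : seq V -> W) s t : leibniz_rule (@shuffle k V) f s t.
Proof.
move: {2}(size s + size t)%N (leqnn (size s + size t)) => n.
elim: n W f s t => [|n IH] W f [|a s] [|b t] Hn;
  try exact: leibniz_shuffle0l; try exact: leibniz_shuffle0r; first by move: Hn => /=; lia.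
have Hst := leibniz_prec_cons a (isT : b :: t != [::]).
have Hts := leibniz_prec_cons b (isT : a :: s != [::]).
rewrite /leibniz_rule wsum_shuffle_prec // Hst => [|W' f']; last by apply: IH; move: Hn => /=; lia.
rewrite Hts => [|W' f']; last by apply: IH; move: Hn => /=; lia.
have -> : dsum (fun x => wsum f (shuffle x (b :: t))) (a :: s) =
    dsum (fun x => wsum f (word_prec x (b :: t))) (a :: s) +
    dsum (fun x => wsum f (word_prec (b :: t) x)) (a :: s).
  by rewrite -dsumD; apply: eq_dsum_size => x sz; rewrite wsum_shuffle_prec ?(nonempty_size _ sz).
have -> : dsum (fun y => wsum f (shuffle (a :: s) y)) (b :: t) =
    dsum (fun y => wsum f (word_prec (a :: s) y)) (b :: t) +
    dsum (fun y => wsum f (word_prec y (a :: s))) (b :: t).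
  by rewrite -dsumD; apply: eq_dsum_size => y sz; rewrite wsum_shuffle_prec ?(nonempty_size _ sz).
have -> : dsum (fun x => dsum (fun y => wsum f (shuffle x y)) (b :: t)) (a :: s) =
    dsum (fun x => dsum (fun y => wsum f (word_prec x y)) (b :: t)) (a :: s) +
    dsum (fun x => dsum (fun y => wsum f (word_prec y x)) (b :: t)) (a :: s).
  rewrite -dsumD; apply: eq_dsum_size => x szx; rewrite -dsumD.
  apply: eq_dsum_size => y szy.
  by rewrite wsum_shuffle_prec ?(nonempty_size _ szx) ?(nonempty_size _ szy).
rewrite [X in _ = _ + lambda *: (_ + X)]dsumC scalerDr addrACA; congr (_ + _).
by rewrite [X in _ + X]addrC addrACA.
Qed.

Lemma leibniz_prec W (f : seq V -> W) s t : leibniz_rule (@word_prec k V) f s t.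
Proof.
case: t => [|b t].
  rewrite /leibniz_rule word_prec0r wsum_nil dsum_nil addr0.
  rewrite [X in lambda *: X]dsum_eq0 => [|x]; last exact: dsum_nil.
  by rewrite dsum_eq0 ?scaler0 ?addr0 // => x; rewrite word_prec0r wsum_nil.
case: s => [|a s].
  rewrite /leibniz_rule word_prec0l wsum_nil !dsum_nil add0r scaler0 addr0.
  by rewrite dsum_eq0 // => y; rewrite word_prec0l wsum_nil.
by apply: leibniz_prec_cons => // W' f'; apply: leibniz_shuffle.
Qed.

End Leibniz.

Section Quotient.
Variables (k : comPzRingType) (V : lmodType k).
Implicit Types (W : lmodType k) (e : fsum V).
Local Notation pi := (\pi_(Tplus V)).

Lemma eq_fsum_eval W (f g : seq V -> W) e : f =1 g -> fsum_eval f e = fsum_eval g e.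
Proof. by move=> fg; apply: eq_bigr => t _; rewrite fg. Qed.

Definition fsum_eval2 W (G : seq V -> seq V -> W) e1 e2 : W :=
  \sum_(t <- e1) \sum_(u <- e2) (t.1 * u.1) *: G t.2 u.2.

Lemma fsum_eval_fbilin W (f : seq V -> W) op e1 e2 :
  fsum_eval f (fbilin op e1 e2) = fsum_eval2 (fun s t => wsum f (op s t)) e1 e2.
Proof.
rewrite /fsum_eval /fbilin big_flatten /= big_allpairs_dep /=.
apply: eq_bigr => t _; apply: eq_bigr => u _.
by rewrite big_map /wsum scaler_sumr.
Qed.

Lemma fsum_eval2_l W (G : seq V -> seq V -> W) e1 e2 :
  fsum_eval2 G e1 e2 = fsum_eval (fun s => fsum_eval (G s) e2) e1.
Proof.
rewrite /fsum_eval; apply: eq_bigr => t _; rewrite scaler_sumr.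
by apply: eq_bigr => u _; rewrite scalerA.
Qed.

Lemma fsum_eval2C W (G : seq V -> seq V -> W) e1 e2 :
  fsum_eval2 G e1 e2 = fsum_eval2 (fun s t => G t s) e2 e1.
Proof.
rewrite /fsum_eval2 exchange_big; apply: eq_bigr => t _; apply: eq_bigr => u _.
by rewrite mulrC.
Qed.

Lemma multilin_fsum_eval W (G : seq V -> seq V -> W) e :
  (forall u, multilin (G^~ u)) -> multilin (fun s => fsum_eval (G s) e).
Proof.
move=> HG; split.
  by rewrite /fsum_eval big1 // => u _; case: (HG u.2) => -> _; rewrite scaler0.
move=> x y r a b; rewrite /fsum_eval scaler_sumr -big_split; apply: eq_bigr => u _.
by case: (HG u.2) => _ ->; rewrite scalerDr !scalerA mulrC.
Qed.

Definition bimultilin (op : seq V -> seq V -> seq (seq V)) : Prop :=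
  forall W (f : seq V -> W), multilin f ->
    (forall t, multilin (fun s => wsum f (op s t))) /\
    (forall s, multilin (fun t => wsum f (op s t))).

Lemma bimultilin_word_prec : bimultilin (@word_prec k V).
Proof.
by move=> W f Hf; split=> u; [apply: multilin_word_prec_l | apply: multilin_word_prec_r].
Qed.

Lemma bimultilin_word_succ : bimultilin (@word_succ k V).
Proof.
by move=> W f Hf; split=> u; [apply: multilin_word_succ_l | apply: multilin_word_succ_r].
Qed.

Lemma tequiv_fbilin op e1 e1' e2 e2' : bimultilin op ->
  tequiv e1 e1' -> tequiv e2 e2' -> tequiv (fbilin op e1 e2) (fbilin op e1' e2').
Proof.
move=> Hop eq1 eq2 W f Hf; have [Hl Hr] := Hop W f Hf.
rewrite !fsum_eval_fbilin !fsum_eval2_l eq1; last by apply: multilin_fsum_eval.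
rewrite -!fsum_eval2_l fsum_eval2C [RHS]fsum_eval2C !fsum_eval2_l eq2 //.
by apply: multilin_fsum_eval => s; apply: Hr.
Qed.

Definition tbilin (op : seq V -> seq V -> seq (seq V)) (x y : Tplus V) : Tplus V :=
  pi (fbilin op (repr x) (repr y)).

Lemma tbilin_pi op e1 e2 : bimultilin op ->
  tbilin op (pi e1) (pi e2) = pi (fbilin op e1 e2).
Proof. by move=> Hop; apply/pi_tequiv/tequiv_fbilin => //; apply: tequiv_repr. Qed.

Lemma precV_pi e1 e2 : precV (pi e1) (pi e2) = pi (fbilin (@word_prec k V) e1 e2).
Proof. exact/tbilin_pi/bimultilin_word_prec. Qed.

Lemma succV_pi e1 e2 : succV (pi e1) (pi e2) = pi (fbilin (@word_succ k V) e1 e2).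
Proof. exact/tbilin_pi/bimultilin_word_succ. Qed.

Lemma fsum_eval_fdiff W (f : seq V -> W) lambda d0 e :
  fsum_eval f (fdiff lambda d0 e) = fsum_eval (dsum lambda d0 f) e.
Proof.
rewrite /fsum_eval /fdiff big_flatten /= big_map.
apply: eq_bigr => t _; rewrite big_map /dsum /fsum_eval scaler_sumr.
by apply: eq_bigr => u _; rewrite scalerA.
Qed.

Lemma dV_pi lambda d0 e : linear d0 -> dV lambda d0 (pi e) = pi (fdiff lambda d0 e).
Proof.
move=> d0_lin; apply: pi_tequiv => W f Hf; rewrite !fsum_eval_fdiff.
by apply: tequiv_repr; apply: multilin_dsum.
Qed.

Lemma piD e1 e2 : pi (e1 ++ e2) = pi e1 + pi e2.
Proof. by rewrite taddE tadd_pi. Qed.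

Lemma piZ c e : pi (fscale c e) = c *: pi e.
Proof. by rewrite -tscale_pi. Qed.

Lemma pi_eval e1 e2 :
  (forall W (f : seq V -> W), fsum_eval f e1 = fsum_eval f e2) -> pi e1 = pi e2.
Proof. by move=> H; apply: pi_tequiv => W f _; apply: H. Qed.

End Quotient.

Section IteratedSums.
Variables (k : comPzRingType) (V : lmodType k).
Implicit Types (W : lmodType k) (e : fsum V).

Definition fsum_eval3 W (G : seq V -> seq V -> seq V -> W) e1 e2 e3 : W :=
  \sum_(t <- e1) \sum_(u <- e2) \sum_(v <- e3) (t.1 * u.1 * v.1) *: G t.2 u.2 v.2.

Lemma eq_fsum_eval2 W (G G' : seq V -> seq V -> W) e1 e2 :
  (forall s t, G s t = G' s t) -> fsum_eval2 G e1 e2 = fsum_eval2 G' e1 e2.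
Proof. by move=> GG'; apply: eq_bigr => t _; apply: eq_bigr => u _; rewrite GG'. Qed.

Lemma fsum_eval2D W (G G' : seq V -> seq V -> W) e1 e2 :
  fsum_eval2 (fun s t => G s t + G' s t) e1 e2 = fsum_eval2 G e1 e2 + fsum_eval2 G' e1 e2.
Proof.
rewrite /fsum_eval2 -big_split; apply: eq_bigr => t _; rewrite -big_split.
by apply: eq_bigr => u _; rewrite scalerDr.
Qed.

Lemma fsum_eval2Z W (G : seq V -> seq V -> W) c e1 e2 :
  fsum_eval2 (fun s t => c *: G s t) e1 e2 = c *: fsum_eval2 G e1 e2.
Proof.
rewrite /fsum_eval2 scaler_sumr; apply: eq_bigr => t _; rewrite scaler_sumr.
by apply: eq_bigr => u _; rewrite !scalerA mulrC.
Qed.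

Lemma fsum_eval2_catl W (G : seq V -> seq V -> W) e1 e2 e3 :
  fsum_eval2 G (e1 ++ e2) e3 = fsum_eval2 G e1 e3 + fsum_eval2 G e2 e3.
Proof. by rewrite /fsum_eval2 big_cat. Qed.

Lemma fsum_eval2_catr W (G : seq V -> seq V -> W) e1 e2 e3 :
  fsum_eval2 G e1 (e2 ++ e3) = fsum_eval2 G e1 e2 + fsum_eval2 G e1 e3.
Proof. by rewrite /fsum_eval2 -big_split; apply: eq_bigr => t _; rewrite big_cat. Qed.

Lemma fsum_eval2_scalel W (G : seq V -> seq V -> W) c e1 e2 :
  fsum_eval2 G (fscale c e1) e2 = c *: fsum_eval2 G e1 e2.
Proof.
rewrite /fsum_eval2 big_map scaler_sumr; apply: eq_bigr => t _; rewrite scaler_sumr.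
by apply: eq_bigr => u _ /=; rewrite scalerA mulrA.
Qed.

Lemma fsum_eval2_scaler W (G : seq V -> seq V -> W) c e1 e2 :
  fsum_eval2 G e1 (fscale c e2) = c *: fsum_eval2 G e1 e2.
Proof.
rewrite /fsum_eval2 scaler_sumr; apply: eq_bigr => t _; rewrite big_map scaler_sumr.
by apply: eq_bigr => u _ /=; rewrite scalerA mulrCA.
Qed.

Lemma fsum_eval2_fdiffl W (G : seq V -> seq V -> W) lambda d0 e1 e2 :
  fsum_eval2 G (fdiff lambda d0 e1) e2 =
  fsum_eval2 (fun s t => dsum lambda d0 (G^~ t) s) e1 e2.
Proof.
rewrite /fsum_eval2 /fdiff big_flatten /= big_map; apply: eq_bigr => t _.
rewrite big_map exchange_big; apply: eq_bigr => u _.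
rewrite /dsum /fsum_eval scaler_sumr; apply: eq_bigr => q _ /=.
by rewrite scalerA mulrAC.
Qed.

Lemma fsum_eval2_fdiffr W (G : seq V -> seq V -> W) lambda d0 e1 e2 :
  fsum_eval2 G e1 (fdiff lambda d0 e2) =
  fsum_eval2 (fun s t => dsum lambda d0 (G s) t) e1 e2.
Proof.
rewrite /fsum_eval2 /fdiff; apply: eq_bigr => t _.
rewrite big_flatten /= big_map; apply: eq_bigr => u _.
rewrite big_map /dsum /fsum_eval scaler_sumr; apply: eq_bigr => q _ /=.
by rewrite scalerA mulrA.
Qed.

Lemma fsum_eval2_fbilinl W (G : seq V -> seq V -> W) op e1 e2 e3 :
  fsum_eval2 G (fbilin op e1 e2) e3 =
  fsum_eval3 (fun x y z => wsum (G^~ z) (op x y)) e1 e2 e3.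
Proof.
rewrite /fsum_eval2 /fsum_eval3 /fbilin big_flatten /= big_allpairs_dep /=.
apply: eq_bigr => t _; apply: eq_bigr => u _.
rewrite big_map exchange_big; apply: eq_bigr => v _.
by rewrite /wsum scaler_sumr.
Qed.

Lemma fsum_eval2_fbilinr W (G : seq V -> seq V -> W) op e1 e2 e3 :
  fsum_eval2 G e1 (fbilin op e2 e3) =
  fsum_eval3 (fun x y z => wsum (G x) (op y z)) e1 e2 e3.
Proof.
rewrite /fsum_eval2 /fsum_eval3; apply: eq_bigr => t _.
rewrite /fbilin big_flatten /= big_allpairs_dep /=.
apply: eq_bigr => u _; apply: eq_bigr => v _.
by rewrite big_map /wsum scaler_sumr; apply: eq_bigr => w _; rewrite mulrA.
Qed.

Lemma eq_fsum_eval3 W (G G' : seq V -> seq V -> seq V -> W) e1 e2 e3 :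
  (forall x y z, G x y z = G' x y z) -> fsum_eval3 G e1 e2 e3 = fsum_eval3 G' e1 e2 e3.
Proof.
move=> GG'; apply: eq_bigr => t _; apply: eq_bigr => u _; apply: eq_bigr => v _.
by rewrite GG'.
Qed.

Lemma fsum_eval3D W (G G' : seq V -> seq V -> seq V -> W) e1 e2 e3 :
  fsum_eval3 (fun x y z => G x y z + G' x y z) e1 e2 e3 =
  fsum_eval3 G e1 e2 e3 + fsum_eval3 G' e1 e2 e3.
Proof.
rewrite /fsum_eval3 -big_split; apply: eq_bigr => t _; rewrite -big_split.
apply: eq_bigr => u _; rewrite -big_split.
by apply: eq_bigr => v _; rewrite scalerDr.
Qed.

End IteratedSums.

Section TplusDendriform.
Variables (k : comPzRingType) (V : lmodType k).
Local Notation pi := (\pi_(Tplus V)).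

Lemma tbilin_linear_r op (a : Tplus V) : bimultilin op -> klinear (tbilin op a).
Proof.
move=> Hop c x y; elim/quotW: a => e1; elim/quotW: x => e2; elim/quotW: y => e3.
rewrite -(piZ c e2) -piD !tbilin_pi // -piZ -piD; apply: pi_eval => W f.
by rewrite fsum_eval_cat fsum_eval_scale !fsum_eval_fbilin fsum_eval2_catr fsum_eval2_scaler.
Qed.

Lemma tbilin_linear_l op (b : Tplus V) : bimultilin op -> klinear (tbilin op ^~ b).
Proof.
move=> Hop c x y; elim/quotW: b => e1; elim/quotW: x => e2; elim/quotW: y => e3.
rewrite -(piZ c e2) -piD !tbilin_pi // -piZ -piD; apply: pi_eval => W f.
by rewrite fsum_eval_cat fsum_eval_scale !fsum_eval_fbilin fsum_eval2_catl fsum_eval2_scalel.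
Qed.

Lemma precV_bilinear : kbilinear (@precV k V).
Proof.
by split=> a; [apply: tbilin_linear_r | apply: tbilin_linear_l]; apply: bimultilin_word_prec.
Qed.

Lemma succV_bilinear : kbilinear (@succV k V).
Proof.
by split=> a; [apply: tbilin_linear_r | apply: tbilin_linear_l]; apply: bimultilin_word_succ.
Qed.

Lemma precVA (x y z : Tplus V) : precV (precV x y) z = precV x (precV y z + succV y z).
Proof.
elim/quotW: x => e1; elim/quotW: y => e2; elim/quotW: z => e3.
(* Explicit instances: [!precV_pi] would match the outer [precV] by unfolding the inner one. *)
rewrite (precV_pi e1 e2) (precV_pi _ e3) (precV_pi e2 e3) (succV_pi e2 e3) -piD precV_pi.
apply: pi_eval => W f.
rewrite !fsum_eval_fbilin fsum_eval2_fbilinl fsum_eval2_catr !fsum_eval2_fbilinr -fsum_eval3D.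
by apply: eq_fsum_eval3 => x y z; apply: wsum_word_precA.
Qed.

Lemma succV_precV (x y z : Tplus V) : precV (succV x y) z = succV x (precV y z).
Proof.
elim/quotW: x => e1; elim/quotW: y => e2; elim/quotW: z => e3.
rewrite (succV_pi e1 e2) (precV_pi _ e3) (precV_pi e2 e3) succV_pi; apply: pi_eval => W f.
rewrite !fsum_eval_fbilin fsum_eval2_fbilinl fsum_eval2_fbilinr.
by apply: eq_fsum_eval3 => x y z; apply: wsum_word_succ_prec.
Qed.

Lemma succVA (x y z : Tplus V) : succV (precV x y + succV x y) z = succV x (succV y z).
Proof.
elim/quotW: x => e1; elim/quotW: y => e2; elim/quotW: z => e3.
rewrite (precV_pi e1 e2) (succV_pi e1 e2) -piD (succV_pi _ e3) (succV_pi e2 e3) succV_pi.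
apply: pi_eval => W f.
rewrite !fsum_eval_fbilin fsum_eval2_catl !fsum_eval2_fbilinl fsum_eval2_fbilinr -fsum_eval3D.
by apply: eq_fsum_eval3 => x y z; apply: wsum_word_succA.
Qed.

Lemma succV_precVC (x y : Tplus V) : succV x y = precV y x.
Proof.
elim/quotW: x => e1; elim/quotW: y => e2.
rewrite precV_pi succV_pi; apply: pi_eval => W f.
rewrite !fsum_eval_fbilin fsum_eval2C; apply: eq_fsum_eval2 => s t.
exact: wsum_word_succ.
Qed.

Variables (lambda : k) (d0 : V -> V).
Hypothesis d0_linear : linear d0.

Lemma dV_linear : klinear (dV lambda d0).
Proof.
move=> c x y; elim/quotW: x => e1; elim/quotW: y => e2.
rewrite -(piZ c e1) -piD !dV_pi // -piZ -piD; apply: pi_eval => W f.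
by rewrite !fsum_eval_fdiff !fsum_eval_cat !fsum_eval_scale !fsum_eval_fdiff.
Qed.

Lemma dV_precV (x y : Tplus V) :
  dV lambda d0 (precV x y) = precV (dV lambda d0 x) y + precV x (dV lambda d0 y)
    + lambda *: precV (dV lambda d0 x) (dV lambda d0 y).
Proof.
elim/quotW: x => e1; elim/quotW: y => e2.
rewrite (precV_pi e1 e2) !dV_pi // (precV_pi _ e2) (precV_pi e1) (precV_pi (fdiff _ _ _)).
rewrite -piZ -!piD; apply: pi_eval => W f.
rewrite fsum_eval_fdiff !fsum_eval_cat fsum_eval_scale !fsum_eval_fbilin.
rewrite fsum_eval2_fdiffl fsum_eval2_fdiffr fsum_eval2_fdiffl fsum_eval2_fdiffr.
rewrite -fsum_eval2Z -!fsum_eval2D; apply: eq_fsum_eval2 => s t.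
by rewrite leibniz_prec dsumC.
Qed.

Lemma dV_succV (x y : Tplus V) :
  dV lambda d0 (succV x y) = succV (dV lambda d0 x) y + succV x (dV lambda d0 y)
    + lambda *: succV (dV lambda d0 x) (dV lambda d0 y).
Proof. by rewrite !succV_precVC dV_precV [X in X + _]addrC. Qed.

End TplusDendriform.

Section KLinear.
Variables (k : comPzRingType) (W1 W2 : lmodType k) (g : W1 -> W2).
Hypothesis g_linear : klinear g.

Lemma klinearD x y : g (x + y) = g x + g y.
Proof. by have := g_linear 1 x y; rewrite !scale1r. Qed.

Lemma klinear0 : g 0 = 0.
Proof. by apply: (@addrI _ (g 0)); rewrite -klinearD !addr0. Qed.

Lemma klinearZ c x : g (c *: x) = c *: g x.
Proof. by have := g_linear c x 0; rewrite !addr0 klinear0 addr0. Qed.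

Lemma klinear_sum I (r : seq I) (F : I -> W1) : g (\sum_(i <- r) F i) = \sum_(i <- r) g (F i).
Proof. by elim: r => [|i r IH]; rewrite ?big_nil ?klinear0 // !big_cons klinearD IH. Qed.

Lemma klinear_fsum_eval (V : lmodType k) (F : seq V -> W1) e :
  g (fsum_eval F e) = fsum_eval (fun w => g (F w)) e.
Proof. by rewrite klinear_sum; apply: eq_bigr => t _; rewrite klinearZ. Qed.

Lemma klinear_wsum (V : lmodType k) (F : seq V -> W1) L :
  g (wsum F L) = wsum (fun w => g (F w)) L.
Proof. exact: klinear_sum. Qed.

End KLinear.

Section UniversalProperty.
Variables (k : comPzRingType) (V : lmodType k) (lambda : k) (d0 : V -> V).
Hypothesis d0_linear : linear d0.
Variables (D : lmodType k) (precD succD : D -> D -> D) (dD : D -> D).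
Hypothesis precD_linear_r : forall a, klinear (precD a).
Hypothesis precD_linear_l : forall b, klinear (precD ^~ b).
Hypothesis precDA : forall a b c, precD (precD a b) c = precD a (precD b c + succD b c).
Hypothesis succD_precDC : forall a b, succD a b = precD b a.
Hypothesis dD_linear : klinear dD.
Hypothesis dD_precD : forall a b,
  dD (precD a b) = precD (dD a) b + precD a (dD b) + lambda *: precD (dD a) (dD b).
Variable psi : V -> D.
Hypothesis psi_linear : klinear psi.
Hypothesis dD_psi : forall v, dD (psi v) = psi (d0 v).
Local Notation pi := (\pi_(Tplus V)).

Fixpoint psi_word (w : seq V) : D :=
  if w is a :: w' then (if w' is [::] then psi a else precD (psi a) (psi_word w')) else 0.

Lemma psi_word_cons a w : w != [::] -> psi_word (a :: w) = precD (psi a) (psi_word w).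
Proof. by case: w. Qed.

Lemma multilin_psi_word : multilin psi_word.
Proof.
split => // u; elim: u => [|y u IH] v r a b.
  by case: v => [|c v] /=; rewrite psi_linear ?precD_linear_l.
by rewrite !cat_cons !psi_word_cons ?IH ?precD_linear_r //; case: u {IH}.
Qed.

Lemma psi_word_prec s t : wsum psi_word (word_prec s t) = precD (psi_word s) (psi_word t).
Proof.
move: {2}(size s + size t)%N (leqnn (size s + size t)) => n.
elim: n s t => [|n IH] [|a s] [|b t] Hn; try by move: Hn => /=; lia.
all: try by rewrite word_prec0l wsum_nil /= (klinear0 (precD_linear_l _)).
all: try by rewrite word_prec0r wsum_nil /= (klinear0 (precD_linear_r _)).
rewrite word_prec_cons // wsum_map_cons.
rewrite (eq_wsum_in (g := fun w => precD (psi a) (psi_word w))); last first.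
  by move=> w /nonempty_shuffle_r nzw; rewrite psi_word_cons.
rewrite -klinear_wsum //; case: s Hn => [|c s] Hn; first by rewrite shuffle_nil_l wsum1.
rewrite wsum_shuffle_prec // !IH; try by move: Hn => /=; lia.
by rewrite -[precD (psi_word (b :: t)) _]succD_precDC -precDA -psi_word_cons.
Qed.

Definition psibar (x : Tplus V) : D := fsum_eval psi_word (repr x).

Lemma psibar_pi e : psibar (pi e) = fsum_eval psi_word e.
Proof. exact: (fsum_eval_repr e multilin_psi_word). Qed.

Lemma psibar_linear : klinear psibar.
Proof.
move=> c x y; elim/quotW: x => e1; elim/quotW: y => e2.
by rewrite -piZ -piD !psibar_pi fsum_eval_cat fsum_eval_scale.
Qed.

Lemma psibar_precV x y : psibar (precV x y) = precD (psibar x) (psibar y).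
Proof.
elim/quotW: x => e1; elim/quotW: y => e2.
rewrite precV_pi !psibar_pi fsum_eval_fbilin fsum_eval2_l.
rewrite (klinear_fsum_eval (precD_linear_l _)); apply: eq_fsum_eval => s.
rewrite (klinear_fsum_eval (precD_linear_r _)); apply: eq_fsum_eval => t.
exact: psi_word_prec.
Qed.

Lemma psibar_succV x y : psibar (succV x y) = succD (psibar x) (psibar y).
Proof. by rewrite succV_precVC psibar_precV succD_precDC. Qed.

Lemma dD_psi_word w : dD (psi_word w) = dsum lambda d0 psi_word w.
Proof.
elim: w => [|a [|b w] IH]; first by rewrite dsum_nil klinear0.
  by rewrite dsum_cons !dsum_nil scaler0 !addr0 /= dD_psi.
rewrite psi_word_cons // dD_precD IH dD_psi -psi_word_cons // [RHS]dsum_cons.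
have dsum_psi_word_cons c : dsum lambda d0 (fun x => psi_word (c :: x)) (b :: w) =
    precD (psi c) (dsum lambda d0 psi_word (b :: w)).
  rewrite (klinear_fsum_eval (precD_linear_r _)); apply: eq_dsum_size => x sz.
  by rewrite psi_word_cons // (nonempty_size _ sz).
by rewrite !dsum_psi_word_cons.
Qed.

Lemma psibar_dV x : dD (psibar x) = psibar (dV lambda d0 x).
Proof.
elim/quotW: x => e; rewrite dV_pi // !psibar_pi fsum_eval_fdiff (klinear_fsum_eval dD_linear).
exact/eq_fsum_eval/dD_psi_word.
Qed.

Lemma psibar_jV v : psibar (jV v) = psi v.
Proof. by rewrite psibar_pi /fsum_eval big_seq1 scale1r. Qed.

Lemma pi_cons (t : k * seq V) e : pi (t :: e) = t.1 *: pi [:: (1, t.2)] + pi e.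
Proof. by rewrite -piZ -piD /= mulr1 -surjective_pairing. Qed.

Lemma pi_word_cons a b w : pi [:: (1, [:: a, b & w])] = precV (jV a) (pi [:: (1, b :: w)]).
Proof.
rewrite /jV precV_pi; apply: pi_eval => W f.
by rewrite fsum_eval_fbilin /fsum_eval /fsum_eval2 !big_seq1 /= mulr1 wsum1.
Qed.

Lemma psibar_unique (g : Tplus V -> D) :
    klinear g -> (forall a b, g (precV a b) = precD (g a) (g b)) ->
    (forall v, g (jV v) = psi v) ->
  g =1 psibar.
Proof.
move=> g_linear g_precV g_jV x; elim/quotW: x => e; rewrite psibar_pi.
have g_word w : g (pi [:: (1, w)]) = psi_word w.
  elim: w => [|a [|b w] IH]; last by rewrite pi_word_cons g_precV g_jV IH.
    have -> : pi [:: (1, [::])] = 0.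
      by apply: pi_tequiv => W f [f0 _]; rewrite /fsum_eval big_seq1 big_nil f0 scaler0.
    exact: klinear0.
  exact: g_jV.
elim: e => [|t e IH]; first by rewrite /fsum_eval big_nil; apply: (klinear0 g_linear).
by rewrite pi_cons klinearD // klinearZ // g_word IH /fsum_eval big_cons.
Qed.

End UniversalProperty.

Unset Implicit Arguments.

Theorem corollary4p5 (k : comPzRingType) (lambda : k) (V : lmodType k) (d0 : V -> V) :
  klinear d0 ->
  comm_diff_dendriform lambda (@precV k V) (@succV k V) (dV lambda d0)
  /\
  (forall (D : lmodType k) (precD succD : D -> D -> D) (dD : D -> D),
     comm_diff_dendriform lambda precD succD dD ->
     forall psi : V -> D, klinear psi ->
     (forall v, dD (psi v) = psi (d0 v)) ->
     exists! psibar : Tplus V -> D,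
       [/\ klinear psibar,
           (forall a b, psibar (precV a b) = precD (psibar a) (psibar b)),
           (forall a b, psibar (succV a b) = succD (psibar a) (psibar b)),
           (forall a, dD (psibar a) = psibar (dV lambda d0 a)) &
           (forall v, psibar (jV v) = psi v)]).
Proof.
move=> d0_linear; split.
  split; first split.
  - split; [exact: precV_bilinear | exact: succV_bilinear | exact: precVA
           | exact: succV_precV | exact: succVA].
  - exact: succV_precVC.
  - split; [exact: dV_linear | exact: dV_precV | exact: dV_succV].
move=> D precD succD dD [[[[precD_r precD_l] _ precDA _ _] succD_precDC] [dD_lin dD_precD _]].
move=> psi psi_linear dD_psi; exists (psibar precD psi); split.
  split; [exact: psibar_linear | exact: psibar_precV | exact: psibar_succV
         | exact: psibar_dV | exact: psibar_jV].
move=> g [g_linear g_precV _ _ g_jV]; apply: functional_extensionality => x.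
by rewrite (psibar_unique precD_r precD_l psi_linear).
Qed.
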